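(* Let $A = (a_{ij})$ be a random $n\times n$ matrix with $a_{ij}=0$ for $i\ge j$ and with the entries $a_{ij}$, $1\le i<j\le n$, independent standard normal random variables. Then for every $n \ge 1$, \[ \mathbb{E}_A\Big[\min_{z\in\{\pm1\}^n} z^T A z\Big] \ge -0.601\sqrt{n} - 0.833\, n^{3/2}. \]
   Context: Here $z^T A z = \sum_{1\le i<j\le n} a_{ij} z_i z_j$. *)

(* classical reals.  Gaussian expectation is defined via
   iterated improper Riemann integrals against the standard normal density. *)
From Stdlib Require Import Reals List.
Import ListNotations.
Open Scope R_scope.

Definition gauss (x : R) : R := exp (- (x * x) / 2) / sqrt (2 * PI).

Definition has_RInt (f : R -> R) (a b l : R) : Prop :=
  exists pr : Riemann_integrable f a b, RiemannInt pr = l.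

Definition has_gauss_int (f : R -> R) (l : R) : Prop :=
  exists V : R -> R,
    (forall M, 0 <= M -> has_RInt (fun x => gauss x * f x) (- M) M (V M)) /\
    (forall eps, 0 < eps -> exists M0, forall M, M0 <= M -> Rabs (V M - l) < eps).

Definition vcons (x : R) (v : nat -> R) : nat -> R :=
  fun i => match i with O => x | S k => v k end.

(* gauss_expect m g l : E[g(X_0,...,X_{m-1})] = l for X_0..X_{m-1} i.i.d.
   N(0,1) (coordinates >= m are set to 0), as iterated integrals. *)
Fixpoint gauss_expect (m : nat) (g : (nat -> R) -> R) (l : R) : Prop :=
  match m with
  | O => l = g (fun _ => 0)
  | S k => exists h : R -> R,
      (forall x, gauss_expect k (fun v => g (vcons x v)) (h x)) /\
      has_gauss_int h l
  end.

Fixpoint sumR (k : nat) (f : nat -> R) : R :=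
  match k with O => 0 | S k' => sumR k' f + f k' end.

Fixpoint signs (n : nat) : list (list R) :=
  match n with
  | O => [ [] ]
  | S k => map (cons 1) (signs k) ++ map (cons (-1)) (signs k)
  end.

Definition min_list (l : list R) : R :=
  match l with [] => 0 | x :: xs => fold_left Rmin xs x end.

(* The matrix A read off a vector v of n*n standard Gaussians:
   a_ij = v (i*n + j) for i < j, a_ij = 0 for i >= j. *)
Definition entry (n : nat) (v : nat -> R) (i j : nat) : R :=
  if Nat.ltb i j then v (i * n + j)%nat else 0.

Definition qform (n : nat) (v : nat -> R) (z : list R) : R :=
  sumR n (fun i => sumR n (fun j => entry n v i j * nth i z 0 * nth j z 0)).

Definition min_qform (n : nat) (v : nat -> R) : R :=
  min_list (map (qform n v) (signs n)).

(* The argument is a soft-min bound.  For lam, a > 0 and S = sum_z e^{-lam z^T A z},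
     min_z z^T A z >= -(1/lam) ln S >= -(S/a + ln a - 1)/lam,
   which is affine in S.  For each z, z^T A z is a Gaussian linear form whose
   squared coefficients sum to n(n-1)/2, so E[e^{-lam z^T A z}] <= e^{lam^2 n^2/4}
   and E[S] <= 2^n e^{lam^2 n^2/4} =: a.  This yields
     E[min] >= -(1 + n ln 2 + lam^2 n^2/4)/lam,
   and lam = 5/(3 sqrt n) together with ln 2 <= 0.6938 gives the constants. *)

From Stdlib Require Import Reals Lra Lia Psatz List Classical ClassicalEpsilon.
From Coquelicot Require Import Coquelicot.
Import ListNotations.
Open Scope R_scope.

Lemma ex_RInt_cont (f : R -> R) a b : (forall x, continuous f x) -> ex_RInt f a b.
Proof. intros Hf. apply (ex_RInt_continuous (V:=R_CompleteNormedModule)). intros; apply Hf. Qed.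

Lemma RInt_ext_R (f g : R -> R) a b : (forall x, f x = g x) -> RInt f a b = RInt g a b.
Proof. intros H. apply RInt_ext. intros x _. apply H. Qed.

Lemma RInt_scal_R (f : R -> R) a b k :
  ex_RInt f a b -> RInt (fun x => k * f x) a b = k * RInt f a b.
Proof. exact (RInt_scal (V:=R_CompleteNormedModule) f a b k). Qed.

Lemma RInt_plus_R (f g : R -> R) a b : ex_RInt f a b -> ex_RInt g a b ->
  RInt (fun x => f x + g x) a b = RInt f a b + RInt g a b.
Proof. exact (RInt_plus (V:=R_CompleteNormedModule) f g a b). Qed.

Lemma RInt_Chasles_R (f : R -> R) a b c : ex_RInt f a b -> ex_RInt f b c ->
  RInt f a b + RInt f b c = RInt f a c.
Proof. exact (RInt_Chasles (V:=R_CompleteNormedModule) f a b c). Qed.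

Lemma RInt_comp_lin_R (f : R -> R) u v a b : ex_RInt f (u * a + v) (u * b + v) ->
  RInt (fun y => u * f (u * y + v)) a b = RInt f (u * a + v) (u * b + v).
Proof. exact (RInt_comp_lin (V:=R_CompleteNormedModule) f u v a b). Qed.

Lemma continuous_of_derive (f : R -> R) x : ex_derive f x -> continuous f x.
Proof. exact (ex_derive_continuous (K:=R_AbsRing) (V:=R_NormedModule) f x). Qed.

Lemma continuous_mult_R (f g : R -> R) x :
  continuous f x -> continuous g x -> continuous (fun y => f y * g y) x.
Proof. exact (continuous_mult (K:=R_AbsRing) f g x). Qed.

Lemma continuous_plus_R (f g : R -> R) x :
  continuous f x -> continuous g x -> continuous (fun y => f y + g y) x.
Proof. exact (continuous_plus (V:=R_NormedModule) f g x). Qed.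

Lemma ex_RInt_ext_R (f g : R -> R) a b : (forall x, f x = g x) -> ex_RInt f a b -> ex_RInt g a b.
Proof. intros H. apply ex_RInt_ext. intros x _. apply H. Qed.

Lemma ex_RInt_plus_R (f g : R -> R) a b :
  ex_RInt f a b -> ex_RInt g a b -> ex_RInt (fun x => f x + g x) a b.
Proof. exact (ex_RInt_plus (V:=R_NormedModule) f g a b). Qed.

Lemma ex_RInt_scal_R (f : R -> R) a b k : ex_RInt f a b -> ex_RInt (fun x => k * f x) a b.
Proof. exact (ex_RInt_scal (V:=R_NormedModule) f a b k). Qed.

(* The unnormalised Gaussian e^{-x^2} and the two functions of the classical
   computation of its integral over R:
     G t = \int_0^t e^{-x^2} dx   and   H t = \int_0^1 e^{-t^2 (1+s^2)} / (1+s^2) ds. *)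
Definition gexp (x : R) : R := exp (- (x * x)).
Definition gexp_int (t : R) : R := RInt gexp 0 t.
Definition aux_integrand (t s : R) : R := exp (- (t * t * (1 + s * s))) / (1 + s * s).
Definition aux_int (t : R) : R := RInt (aux_integrand t) 0 1.

Lemma one_plus_sq_neq0 s : 1 + s * s <> 0.
Proof. apply Rgt_not_eq. nra. Qed.

Lemma continuous_gexp x : continuous gexp x.
Proof. apply continuous_of_derive. unfold gexp. auto_derive. exact I. Qed.

Lemma ex_RInt_gexp a b : ex_RInt gexp a b.
Proof. apply ex_RInt_cont, continuous_gexp. Qed.

Lemma is_derive_gexp_int (t : R) : is_derive gexp_int t (gexp t).
Proof.
  apply (is_derive_RInt gexp gexp_int 0).
  - apply filter_forall. intros. apply (RInt_correct (V:=R_CompleteNormedModule)), ex_RInt_gexp.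
  - apply continuous_gexp.
Qed.

(* The t-derivative of the integrand of H, and its joint continuity, which
   licenses differentiation under the integral sign. *)
Definition aux_integrand_dt (t s : R) : R := -2 * t * exp (- (t * t * (1 + s * s))).

Lemma is_derive_aux_integrand (t s : R) :
  is_derive (fun u => aux_integrand u s) t (aux_integrand_dt t s).
Proof.
  unfold aux_integrand, aux_integrand_dt. auto_derive.
  - exact I.
  - field. apply one_plus_sq_neq0.
Qed.

Lemma continuity_aux_integrand_dt t s : continuity_2d_pt aux_integrand_dt t s.
Proof.
  unfold aux_integrand_dt.
  apply continuity_2d_pt_mult.
  { apply continuity_2d_pt_mult; [apply continuity_2d_pt_const | apply continuity_2d_pt_id1]. }
  apply continuity_2d_pt_filterlim.
  eapply (filterlim_comp _ _ _ (fun z : R * R => - (fst z * fst z * (1 + snd z * snd z))) exp).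
  2: apply continuous_exp.
  apply (continuity_2d_pt_filterlim (fun u v => - (u * u * (1 + v * v)))).
  apply continuity_2d_pt_opp, continuity_2d_pt_mult.
  - apply continuity_2d_pt_mult; apply continuity_2d_pt_id1.
  - apply continuity_2d_pt_plus; [apply continuity_2d_pt_const |].
    apply continuity_2d_pt_mult; apply continuity_2d_pt_id2.
Qed.

(* H' t = \int_0^1 -2 t e^{-t^2} e^{-(ts)^2} ds = -2 e^{-t^2} G t, by the substitution x = t s. *)
Lemma is_derive_aux_int (t : R) : is_derive aux_int t (-2 * gexp t * gexp_int t).
Proof.
  assert (Hder := is_derive_RInt_param aux_integrand 0 1 t).
  rewrite (RInt_ext_R _ (aux_integrand_dt t)) in Hder.
  2: { intros s. apply is_derive_unique, is_derive_aux_integrand. }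
  replace (-2 * gexp t * gexp_int t) with (RInt (aux_integrand_dt t) 0 1).
  - apply Hder.
    + apply filter_forall. intros u s _. eexists. apply is_derive_aux_integrand.
    + intros s _. eapply continuity_2d_pt_ext; [| apply continuity_aux_integrand_dt].
      intros u v; simpl. symmetry. apply is_derive_unique, is_derive_aux_integrand.
    + apply filter_forall. intros u. apply ex_RInt_cont. intros s.
      apply continuous_of_derive. unfold aux_integrand. auto_derive. apply one_plus_sq_neq0.
  - rewrite (RInt_ext_R _ (fun s => (-2 * gexp t) * (t * gexp (t * s + 0)))).
    2: { intros s. unfold aux_integrand_dt, gexp.
         replace (- (t * t * (1 + s * s)))
           with (- (t * t) + - ((t * s + 0) * (t * s + 0))) by ring.
         rewrite exp_plus. ring. }
    rewrite RInt_scal_R, RInt_comp_lin_R.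
    + unfold gexp_int. replace (t * 0 + 0) with 0 by ring.
      replace (t * 1 + 0) with t by ring. reflexivity.
    + apply ex_RInt_gexp.
    + apply ex_RInt_cont. intros s. apply continuous_of_derive. unfold gexp. auto_derive. exact I.
Qed.

Lemma aux_int_0 : aux_int 0 = PI / 4.
Proof.
  unfold aux_int. rewrite (RInt_ext_R _ (fun s => / (1 + s²))).
  2: { intros s. unfold aux_integrand, Rsqr. rewrite Rmult_0_l, Rmult_0_l, Ropp_0, exp_0.
       field. apply one_plus_sq_neq0. }
  replace (PI / 4) with (minus (atan 1) (atan 0)).
  2: { rewrite atan_1, atan_0. unfold minus, plus, opp; simpl. ring. }
  apply (is_RInt_unique (V:=R_CompleteNormedModule)), (is_RInt_derive (V:=R_CompleteNormedModule)).
  - intros. apply is_derive_atan.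
  - intros. apply continuous_of_derive. auto_derive. apply one_plus_sq_neq0.
Qed.

(* G^2 + H has derivative 2 e^{-t^2} G - 2 e^{-t^2} G = 0, so it is constant,
   equal to its value pi/4 at 0; as H >= 0 this bounds G. *)
Lemma gexp_int_sq_le t : gexp_int t * gexp_int t <= PI / 4.
Proof.
  set (F u := gexp_int u * gexp_int u + aux_int u).
  assert (HF : forall u, is_derive F u 0).
  { intros u.
    replace 0 with (gexp u * gexp_int u + gexp_int u * gexp u + (-2 * gexp u * gexp_int u))
      by ring.
    apply (is_derive_plus (K:=R_AbsRing) (V:=R_NormedModule)); [| apply is_derive_aux_int].
    apply (is_derive_mult gexp_int gexp_int); try apply is_derive_gexp_int.
    intros; simpl; apply Rmult_comm. }
  assert (HF0 : F 0 = PI / 4).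
  { unfold F, gexp_int. rewrite RInt_point, aux_int_0. unfold zero; simpl. ring. }
  assert (Hconst : F t = PI / 4).
  { destruct (MVT_gen F 0 t (fun _ => 0)) as [c [_ Hc]].
    - intros. apply HF.
    - intros. apply continuity_pt_filterlim, continuous_of_derive. eexists. apply HF.
    - lra. }
  assert (Haux : 0 <= aux_int t).
  { apply RInt_ge_0; [lra | |].
    - apply ex_RInt_cont. intros s. apply continuous_of_derive. unfold aux_integrand. auto_derive.
      apply one_plus_sq_neq0.
    - intros s _. unfold aux_integrand. apply Rle_mult_inv_pos; [apply Rlt_le, exp_pos | nra]. }
  unfold F in Hconst. lra.
Qed.

(* \int_a^b e^{-x^2} = G b - G a, and |G| <= sqrt(pi)/2. *)
Lemma RInt_gexp_le a b : RInt gexp a b <= sqrt PI.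
Proof.
  assert (E : RInt gexp a b = gexp_int b - gexp_int a).
  { unfold gexp_int.
    pose proof (RInt_Chasles_R gexp 0 a b (ex_RInt_gexp _ _) (ex_RInt_gexp _ _)). lra. }
  rewrite E. pose proof (gexp_int_sq_le a). pose proof (gexp_int_sq_le b).
  destruct (Rle_dec (gexp_int b - gexp_int a) 0).
  { pose proof (sqrt_pos PI). lra. }
  rewrite <- (sqrt_square (gexp_int b - gexp_int a)) by lra.
  apply sqrt_le_1_alt. nra.
Qed.

Lemma RInt_gauss_le a b : RInt gauss a b <= 1.
Proof.
  set (q := / sqrt 2).
  assert (Hs2 : 0 < sqrt 2) by (apply sqrt_lt_R0; lra).
  assert (HPI : 0 < sqrt PI) by (apply sqrt_lt_R0, PI_RGT_0).
  assert (Hq : q * q = / 2).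
  { unfold q. rewrite <- Rinv_mult, sqrt_sqrt by lra. reflexivity. }
  rewrite (RInt_ext_R _ (fun x => / sqrt PI * (q * gexp (q * x + 0)))).
  2: { intros x. unfold gauss, gexp.
       replace (- ((q * x + 0) * (q * x + 0))) with (- (x * x) / 2)
         by (replace ((q * x + 0) * (q * x + 0)) with (q * q * (x * x)) by ring; rewrite Hq; field).
       rewrite sqrt_mult by (pose proof PI_RGT_0; lra). unfold q. field. lra. }
  rewrite RInt_scal_R, RInt_comp_lin_R.
  - pose proof (RInt_gexp_le (q * a + 0) (q * b + 0)).
    apply (Rmult_le_reg_l (sqrt PI)); [lra |].
    rewrite <- Rmult_assoc, Rinv_r by lra. lra.
  - apply ex_RInt_gexp.
  - apply ex_RInt_cont. intros x. apply continuous_of_derive. unfold gexp. auto_derive. exact I.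
Qed.

Lemma gauss_pos x : 0 < gauss x.
Proof.
  unfold gauss. apply Rdiv_lt_0_compat; [apply exp_pos |].
  apply sqrt_lt_R0. pose proof PI_RGT_0. lra.
Qed.

Lemma continuous_gauss x : continuous gauss x.
Proof. apply continuous_of_derive. unfold gauss. auto_derive. exact I. Qed.

Definition gint (f : R -> R) (M : R) : R := RInt (fun x => gauss x * f x) (- M) M.

Definition gauss_lim (f : R -> R) (l : R) : Prop :=
  (forall M, 0 <= M -> ex_RInt (fun x => gauss x * f x) (- M) M) /\
  is_lim (gint f) p_infty l.

(* [gauss_lim] is equivalent to [has_gauss_int]; it is phrased with Coquelicot's
   integrals and limits so that their algebra of limits can be used. *)
Lemma has_gauss_int_iff f l : has_gauss_int f l <-> gauss_lim f l.
Proof.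
  split.
  - intros [V [HV Hconv]].
    assert (HVM : forall M, 0 <= M -> ex_RInt (fun x => gauss x * f x) (- M) M /\ gint f M = V M).
    { intros M HM. destruct (HV M HM) as [pr Hpr]. split.
      - apply ex_RInt_Reals_1, pr.
      - unfold gint. rewrite <- Hpr. apply RInt_Reals. }
    split; [intros M HM; apply HVM, HM |].
    apply is_lim_spec. intros eps. destruct (Hconv eps (cond_pos eps)) as [M0 HM0].
    exists (Rmax M0 0). intros M HM. pose proof (Rmax_l M0 0). pose proof (Rmax_r M0 0).
    rewrite (proj2 (HVM M ltac:(lra))). apply HM0. lra.
  - intros [Hex Hconv]. apply is_lim_spec in Hconv.
    exists (gint f). split.
    + intros M HM. exists (ex_RInt_Reals_0 _ _ _ (Hex M HM)). symmetry. apply RInt_Reals.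
    + intros eps Heps. destruct (Hconv (mkposreal eps Heps)) as [M0 HM0].
      exists (M0 + 1). intros M HM. apply HM0. lra.
Qed.

Lemma gauss_lim_ext f g l : (forall x, f x = g x) -> gauss_lim f l -> gauss_lim g l.
Proof.
  intros E [Hex Hconv]. split.
  - intros M HM. apply (ex_RInt_ext_R (fun x => gauss x * f x)); [intros; rewrite E; auto | auto].
  - apply (is_lim_ext_loc (gint f)); auto.
    apply filter_forall. intros M. apply RInt_ext_R. intros x. rewrite E. reflexivity.
Qed.

Lemma gauss_lim_plus f g a b :
  gauss_lim f a -> gauss_lim g b -> gauss_lim (fun x => f x + g x) (a + b).
Proof.
  intros [Fex Fconv] [Gex Gconv].
  assert (Hex : forall M, 0 <= M -> ex_RInt (fun x => gauss x * (f x + g x)) (- M) M).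
  { intros M HM. apply (ex_RInt_ext_R (fun x => gauss x * f x + gauss x * g x)).
    - intros; ring.
    - apply ex_RInt_plus_R; auto. }
  split; auto.
  apply (is_lim_ext_loc (fun M => gint f M + gint g M)); [| apply is_lim_plus'; auto].
  exists 0. intros M HM. unfold gint. rewrite <- RInt_plus_R by (apply Fex || apply Gex; lra).
  apply RInt_ext_R. intros; ring.
Qed.

Lemma gauss_lim_scal f a k : gauss_lim f a -> gauss_lim (fun x => k * f x) (k * a).
Proof.
  intros [Fex Fconv].
  assert (Hex : forall M, 0 <= M -> ex_RInt (fun x => gauss x * (k * f x)) (- M) M).
  { intros M HM. apply (ex_RInt_ext_R (fun x => k * (gauss x * f x))).
    - intros; ring.
    - apply ex_RInt_scal_R; auto. }
  split; auto.
  apply (is_lim_ext_loc (fun M => k * gint f M)); [| apply (is_lim_scal_l _ k _ a); auto].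
  exists 0. intros M HM. unfold gint. rewrite <- RInt_scal_R by (apply Fex; lra).
  apply RInt_ext_R. intros; ring.
Qed.

Lemma gauss_lim_le f g a b :
  (forall x, f x <= g x) -> gauss_lim f a -> gauss_lim g b -> a <= b.
Proof.
  intros Hfg [Fex Fconv] [Gex Gconv].
  apply (is_lim_le_loc (gint f) (gint g) p_infty a b); auto.
  exists 0. intros M HM. apply RInt_le; [lra | apply Fex | apply Gex |]; try lra.
  intros x _. apply Rmult_le_compat_l; [apply Rlt_le, gauss_pos | apply Hfg].
Qed.

Lemma ex_RInt_gauss_mult f a b : (forall x, continuous f x) -> ex_RInt (fun x => gauss x * f x) a b.
Proof.
  intros Hf. apply ex_RInt_cont. intros x. apply continuous_mult_R; auto using continuous_gauss.
Qed.

Section NonnegativeIntegrand.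
Variable f : R -> R.
Hypothesis f_cont : forall x, continuous f x.
Hypothesis f_ge0 : forall x, 0 <= f x.

Lemma RInt_gauss_mult_ge0 a b : a <= b -> 0 <= RInt (fun x => gauss x * f x) a b.
Proof.
  intros Hab. apply RInt_ge_0; auto using ex_RInt_gauss_mult.
  intros x _. apply Rmult_le_pos; [apply Rlt_le, gauss_pos | apply f_ge0].
Qed.

Lemma gint_mono M M' : 0 <= M -> M <= M' -> gint f M <= gint f M'.
Proof.
  intros HM HMM'. unfold gint.
  rewrite <- (RInt_Chasles_R _ (- M') (- M) M') by apply ex_RInt_gauss_mult, f_cont.
  rewrite <- (RInt_Chasles_R _ (- M) M M') by apply ex_RInt_gauss_mult, f_cont.
  pose proof (RInt_gauss_mult_ge0 (- M') (- M) ltac:(lra)).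
  pose proof (RInt_gauss_mult_ge0 M M' HMM').
  lra.
Qed.

Lemma gauss_lim_bounded B :
  (forall M, 0 <= M -> gint f M <= B) -> exists l, 0 <= l <= B /\ gauss_lim f l.
Proof.
  intros HB.
  set (E y := exists M, 0 <= M /\ y = gint f M).
  destruct (completeness E) as [l [Hub Hlub]].
  { exists B. intros y [M [HM ->]]. auto. }
  { exists (gint f 0), 0. split; auto; lra. }
  assert (Hle : forall M, 0 <= M -> gint f M <= l).
  { intros M HM. apply Hub. exists M. auto. }
  exists l. split; [split |].
  - pose proof (RInt_gauss_mult_ge0 (- 0) 0 ltac:(lra)). pose proof (Hle 0 ltac:(lra)).
    unfold gint in *. lra.
  - apply Hlub. intros y [M [HM ->]]. auto.
  - split; [intros; apply ex_RInt_gauss_mult, f_cont |].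
    apply is_lim_spec. intros eps. pose proof (cond_pos eps).
    destruct (classic (exists M0, 0 <= M0 /\ l - eps < gint f M0)) as [[M0 [HM0 Hclose]] | Hfar].
    + exists M0. intros M HM.
      pose proof (gint_mono M0 M HM0 ltac:(lra)). pose proof (Hle M ltac:(lra)).
      apply Rabs_def1; lra.
    + exfalso. assert (l <= l - eps); [| lra].
      apply Hlub. intros y [M [HM ->]].
      apply Rnot_lt_le. intros Hlt. apply Hfar. exists M. auto.
Qed.

Lemma gint_le_lim l M : gauss_lim f l -> 0 <= M -> gint f M <= l.
Proof.
  intros [_ Hconv] HM.
  assert (H : Rbar_le (gint f M) l).
  { apply (is_lim_le_loc (fun _ => gint f M) (gint f) p_infty); auto using is_lim_const.
    exists M. intros y Hy. apply gint_mono; lra. }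
  exact H.
Qed.

End NonnegativeIntegrand.

(* The total mass of the standard normal density.  It lies in [0,1], which is
   all that the lower bound needs (it is in fact 1). *)
Definition gauss_mass : R := real (Lim (gint (fun _ => 1)) p_infty).

Lemma gauss_mass_spec : 0 <= gauss_mass <= 1 /\ gauss_lim (fun _ => 1) gauss_mass.
Proof.
  destruct (gauss_lim_bounded (fun _ => 1)) with (B := 1) as [l [Hl [Hex Hconv]]].
  - intros; apply continuous_const.
  - intros; lra.
  - intros M _. unfold gint. rewrite (RInt_ext_R _ gauss) by (intros; ring). apply RInt_gauss_le.
  - unfold gauss_mass. rewrite (is_lim_unique _ _ _ Hconv). simpl. split; [| split]; auto.
Qed.

Lemma gauss_lim_const k : gauss_lim (fun _ => k) (k * gauss_mass).
Proof.
  apply (gauss_lim_ext (fun _ => k * 1)); [intros; ring |].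
  apply gauss_lim_scal, gauss_mass_spec.
Qed.

Lemma continuous_exp_lin t x : continuous (fun y => exp (t * y)) x.
Proof. apply continuous_of_derive. auto_derive. exact I. Qed.

(* Moment generating function: E[e^{tX}] <= e^{t^2/2}, because
   gauss x * e^{tx} = e^{t^2/2} gauss (x - t). *)
Lemma gauss_lim_exp t : exists J, 0 <= J <= exp (t * t / 2) /\ gauss_lim (fun x => exp (t * x)) J.
Proof.
  destruct (gauss_lim_bounded (fun x => exp (t * x))) with (B := exp (t * t / 2)) as [J HJ];
    eauto using continuous_exp_lin.
  - intros; apply Rlt_le, exp_pos.
  - intros M HM. unfold gint.
    rewrite (RInt_ext_R _ (fun x => exp (t * t / 2) * (1 * gauss (1 * x + - t)))).
    2: { intros x. unfold gauss.
         replace (- ((1 * x + - t) * (1 * x + - t)) / 2)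
           with (- (x * x) / 2 + t * x + - (t * t / 2)) by field.
         rewrite !exp_plus, exp_Ropp. field. split; [apply Rgt_not_eq, exp_pos |].
         apply Rgt_not_eq, sqrt_lt_R0. pose proof PI_RGT_0; lra. }
    rewrite RInt_scal_R, RInt_comp_lin_R.
    + pose proof (RInt_gauss_le (1 * - M + - t) (1 * M + - t)). pose proof (exp_pos (t * t / 2)).
      rewrite <- (Rmult_1_r (exp (t * t / 2))) at 2. apply Rmult_le_compat_l; lra.
    + apply ex_RInt_cont, continuous_gauss.
    + apply ex_RInt_scal_R, ex_RInt_cont. intros. apply continuous_of_derive.
      unfold gauss. auto_derive. exact I.
Qed.

(* Every continuous f with |f x| <= A + B (e^x + e^{-x}) has a Gaussian
   expectation: f + phi is nonnegative with truncated integrals below 2 E[phi],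
   where phi is the dominating function. *)
Lemma gauss_lim_dominated f A B : (forall x, continuous f x) -> 0 <= A -> 0 <= B ->
  (forall x, Rabs (f x) <= A + B * (exp x + exp (- x))) -> exists l, gauss_lim f l.
Proof.
  intros Hf HA HB Hdom.
  set (phi x := A + B * (exp (1 * x) + exp (-1 * x))).
  assert (Hphi_cont : forall x, continuous phi x).
  { intros. apply continuous_plus_R; [apply continuous_const |].
    apply continuous_mult_R; [apply continuous_const |].
    apply continuous_plus_R; apply continuous_exp_lin. }
  assert (Hphi_dom : forall x, - phi x <= f x <= phi x).
  { intros x. unfold phi. rewrite Rmult_1_l. replace (-1 * x) with (- x) by ring.
    specialize (Hdom x). unfold Rabs in Hdom. destruct (Rcase_abs (f x)); lra. }
  destruct (gauss_lim_exp 1) as [J1 [_ HJ1]].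
  destruct (gauss_lim_exp (-1)) as [J2 [_ HJ2]].
  assert (Hphi : gauss_lim phi (A * gauss_mass + B * (J1 + J2))).
  { apply gauss_lim_plus; [apply gauss_lim_const |]. apply gauss_lim_scal, gauss_lim_plus; auto. }
  set (lp := A * gauss_mass + B * (J1 + J2)) in Hphi.
  destruct (gauss_lim_bounded (fun x => f x + phi x)) with (B := 2 * lp) as [l1 [_ Hl1]].
  - intros; apply continuous_plus_R; auto.
  - intros x. specialize (Hphi_dom x). lra.
  - intros M HM. apply Rle_trans with (2 * gint phi M).
    + unfold gint. rewrite <- RInt_scal_R by apply ex_RInt_gauss_mult, Hphi_cont.
      apply RInt_le; [lra | apply ex_RInt_gauss_mult; intros; apply continuous_plus_R; auto | |].
      * apply ex_RInt_scal_R, ex_RInt_gauss_mult, Hphi_cont.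
      * intros x _. specialize (Hphi_dom x). pose proof (gauss_pos x). nra.
    + assert (gint phi M <= lp); [| lra].
      apply gint_le_lim; auto. intros x. specialize (Hphi_dom x). lra.
  - exists (l1 + -1 * lp). apply (gauss_lim_ext (fun x => (f x + phi x) + -1 * phi x)).
    + intros; ring.
    + apply gauss_lim_plus, gauss_lim_scal; auto.
Qed.

Lemma sumR_ext_lt n f g : (forall i, (i < n)%nat -> f i = g i) -> sumR n f = sumR n g.
Proof.
  induction n as [| n IH]; simpl; intros H; auto.
  rewrite IH by (intros; apply H; lia). rewrite H by lia. reflexivity.
Qed.

Lemma sumR_ext n f g : (forall i, f i = g i) -> sumR n f = sumR n g.
Proof. intros H. apply sumR_ext_lt. intros; apply H. Qed.

Lemma sumR_le_lt n f g : (forall i, (i < n)%nat -> f i <= g i) -> sumR n f <= sumR n g.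
Proof.
  induction n as [| n IH]; simpl; intros H; [lra |].
  pose proof (IH ltac:(intros; apply H; lia)). pose proof (H n ltac:(lia)). lra.
Qed.

Lemma sumR_plus n f g : sumR n (fun i => f i + g i) = sumR n f + sumR n g.
Proof. induction n; simpl; [ring | rewrite IHn; ring]. Qed.

Lemma sumR_scal n c f : sumR n (fun i => c * f i) = c * sumR n f.
Proof. induction n; simpl; [ring | rewrite IHn; ring]. Qed.

Lemma sumR_const n c : sumR n (fun _ => c) = INR n * c.
Proof. induction n; simpl sumR; [simpl; ring | rewrite IHn, S_INR; ring]. Qed.

Lemma sumR_nonneg n f : (forall i, 0 <= f i) -> 0 <= sumR n f.
Proof. induction n; simpl; intros H; [lra | pose proof (H n); pose proof (IHn H); lra]. Qed.

Lemma sumR_abs n f : Rabs (sumR n f) <= sumR n (fun i => Rabs (f i)).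
Proof.
  induction n; simpl; [rewrite Rabs_R0; lra |].
  eapply Rle_trans; [apply Rabs_triang | lra].
Qed.

Lemma sumR_shift k f : sumR (S k) f = f 0%nat + sumR k (fun i => f (S i)).
Proof. induction k; simpl in *; [ring | rewrite IHk; ring]. Qed.

Lemma sumR_mul a b F : sumR (a * b) F = sumR a (fun i => sumR b (fun j => F (i * b + j)%nat)).
Proof.
  assert (Happ : forall p q G, sumR (p + q) G = sumR p G + sumR q (fun j => G (p + j)%nat)).
  { intros p q G. induction q; simpl; [rewrite Nat.add_0_r; ring |].
    rewrite Nat.add_succ_r. simpl. rewrite IHq. ring. }
  induction a; simpl; auto. rewrite Nat.add_comm, Happ, IHa. reflexivity.
Qed.

Lemma sumR_vcons_dist m x y v w :
  sumR (S m) (fun i => Rabs (vcons x v i - vcons y w i)) =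
  Rabs (x - y) + sumR m (fun i => Rabs (v i - w i)).
Proof. rewrite sumR_shift. reflexivity. Qed.

Lemma sumR_dist_diag m v : sumR m (fun i => Rabs (v i - v i)) = 0.
Proof.
  rewrite (sumR_ext m _ (fun _ => 0)); [rewrite sumR_const; ring |].
  intros i. rewrite Rminus_diag. apply Rabs_R0.
Qed.

Lemma expect_ext m : forall f g l, (forall v, f v = g v) ->
  gauss_expect m f l -> gauss_expect m g l.
Proof.
  induction m as [| m IH]; simpl; intros f g l E H.
  - rewrite H; auto.
  - destruct H as [h [Hsec Hint]]. exists h. split; auto.
    intros x. apply (IH _ _ _ (fun v => E (vcons x v))), Hsec.
Qed.

Lemma expect_plus m : forall f g a b, gauss_expect m f a -> gauss_expect m g b ->
  gauss_expect m (fun v => f v + g v) (a + b).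
Proof.
  induction m as [| m IH]; simpl; intros f g a b Hf Hg.
  - subst; auto.
  - destruct Hf as [h1 [F1 F2]], Hg as [h2 [G1 G2]].
    exists (fun x => h1 x + h2 x). split; [intros x; apply IH; auto |].
    apply has_gauss_int_iff, gauss_lim_plus; apply has_gauss_int_iff; auto.
Qed.

Lemma expect_scal m : forall f a k, gauss_expect m f a ->
  gauss_expect m (fun v => k * f v) (k * a).
Proof.
  induction m as [| m IH]; simpl; intros f a k Hf.
  - subst; auto.
  - destruct Hf as [h [F1 F2]].
    exists (fun x => k * h x). split; [intros x; apply IH; auto |].
    apply has_gauss_int_iff, gauss_lim_scal, has_gauss_int_iff; auto.
Qed.

Lemma expect_const m : forall k, gauss_expect m (fun _ => k) (k * gauss_mass ^ m).
Proof.
  induction m as [| m IH]; simpl; intros k; [ring |].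
  exists (fun _ => k * gauss_mass ^ m). split; [intros; apply IH |].
  replace (k * (gauss_mass * gauss_mass ^ m)) with ((k * gauss_mass ^ m) * gauss_mass) by ring.
  apply has_gauss_int_iff, gauss_lim_const.
Qed.

Lemma expect_le m : forall f g a b, (forall v, f v <= g v) ->
  gauss_expect m f a -> gauss_expect m g b -> a <= b.
Proof.
  induction m as [| m IH]; simpl; intros f g a b Hfg Hf Hg.
  - subst; auto.
  - destruct Hf as [h1 [F1 F2]], Hg as [h2 [G1 G2]].
    apply (gauss_lim_le h1 h2); try apply has_gauss_int_iff; auto.
    intros x. apply (IH (fun v => f (vcons x v)) (fun v => g (vcons x v))); auto.
Qed.

Lemma gauss_mass_pow m : 0 <= gauss_mass ^ m <= 1.
Proof.
  destruct gauss_mass_spec as [[H0 H1] _]. split; [apply pow_le; auto |].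
  induction m; simpl; nra.
Qed.

Lemma expect_diff_le m g1 g2 a b D : 0 <= D -> (forall v, g1 v - g2 v <= D) ->
  gauss_expect m g1 a -> gauss_expect m g2 b -> a - b <= D.
Proof.
  intros HD Hdiff H1 H2.
  assert (Hle : a + -1 * b <= D * gauss_mass ^ m).
  { apply (expect_le m (fun v => g1 v + -1 * g2 v) (fun _ => D)).
    - intros v. specialize (Hdiff v). lra.
    - apply expect_plus, expect_scal; auto.
    - apply expect_const. }
  pose proof (gauss_mass_pow m). nra.
Qed.

(* Lipschitz functions are continuous, and |x| <= e^x + e^{-x}: together they
   put a Lipschitz function within reach of [gauss_lim_dominated]. *)
Lemma lipschitz_continuous (h : R -> R) K : 0 <= K ->
  (forall x y, Rabs (h x - h y) <= K * Rabs (x - y)) -> forall x, continuous h x.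
Proof.
  intros HK Hlip x. apply continuity_pt_filterlim.
  intros eps Heps. exists (eps / (K + 1)). split; [apply Rdiv_lt_0_compat; lra |].
  intros y [_ Hy]. simpl in *. unfold R_dist in *.
  apply Rle_lt_trans with ((K + 1) * Rabs (y - x)).
  - pose proof (Hlip y x). pose proof (Rabs_pos (y - x)). nra.
  - apply (Rmult_lt_compat_l (K + 1)) in Hy; [| lra].
    replace ((K + 1) * (eps / (K + 1))) with eps in Hy by (field; lra). exact Hy.
Qed.

Lemma abs_le_exp_sum x : Rabs x <= exp x + exp (- x).
Proof.
  pose proof (exp_ineq1_le x). pose proof (exp_ineq1_le (- x)).
  pose proof (exp_pos x). pose proof (exp_pos (- x)).
  unfold Rabs. destruct (Rcase_abs x); lra.
Qed.

(* By induction: the expectation h x of the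
   section at first coordinate x is again K-Lipschitz in x, hence continuous
   and dominated by |h 0| + K (e^x + e^{-x}). *)
Lemma expect_lipschitz m : forall K g, 0 <= K ->
  (forall v w, Rabs (g v - g w) <= K * sumR m (fun i => Rabs (v i - w i))) ->
  exists l, gauss_expect m g l.
Proof.
  induction m as [| m IH]; intros K g HK Hg.
  - exists (g (fun _ => 0)). reflexivity.
  - assert (Hsec : forall x, exists l, gauss_expect m (fun v => g (vcons x v)) l).
    { intros x. apply (IH K); auto. intros v w.
      specialize (Hg (vcons x v) (vcons x w)).
      rewrite sumR_vcons_dist, Rminus_diag, Rabs_R0, Rplus_0_l in Hg. exact Hg. }
    destruct (choice _ Hsec) as [h Hh].
    assert (Hlip : forall x y, Rabs (h x - h y) <= K * Rabs (x - y)).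
    { assert (Hone : forall x y, h x - h y <= K * Rabs (x - y)).
      { intros x y.
        apply (expect_diff_le m (fun v => g (vcons x v)) (fun v => g (vcons y v)));
          [apply Rmult_le_pos; auto using Rabs_pos | | apply Hh | apply Hh].
        intros v. specialize (Hg (vcons x v) (vcons y v)).
        rewrite sumR_vcons_dist, sumR_dist_diag, Rplus_0_r in Hg.
        eapply Rle_trans; [apply Rle_abs | exact Hg]. }
      intros x y. pose proof (Hone x y). pose proof (Hone y x).
      rewrite (Rabs_minus_sym y x) in *. apply Rabs_le. lra. }
    destruct (gauss_lim_dominated h (Rabs (h 0)) K) as [l Hl]; auto using Rabs_pos.
    { apply (lipschitz_continuous h K); auto. }
    { intros x. pose proof (Hlip x 0). pose proof (abs_le_exp_sum x).
      pose proof (Rabs_triang_inv (h x) (h 0)). rewrite Rminus_0_r in *. nra. }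
    exists l. exists h. split; auto. apply has_gauss_int_iff; auto.
Qed.

Lemma expect_exp_linear m : forall w, exists l,
  0 <= l <= exp (sumR m (fun i => w i * w i) / 2) /\
  gauss_expect m (fun v => exp (sumR m (fun i => w i * v i))) l.
Proof.
  induction m as [| m IH]; intros w.
  - exists 1. simpl. rewrite Rdiv_0_l, exp_0. split; [lra | auto].
  - destruct (IH (fun i => w (S i))) as [l [Hl Hexp]].
    destruct (gauss_lim_exp (w 0%nat)) as [J [HJ HJexp]].
    exists (l * J). split; [split |].
    + nra.
    + rewrite sumR_shift, Rdiv_plus_distr, Rplus_comm, exp_plus.
      apply Rmult_le_compat; lra.
    + exists (fun x => exp (w 0%nat * x) * l). split.
      * intros x.
        apply (expect_ext m (fun v => exp (w 0%nat * x) * exp (sumR m (fun i => w (S i) * v i)))).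
        -- intros v. rewrite sumR_shift, exp_plus. reflexivity.
        -- apply expect_scal; auto.
      * apply has_gauss_int_iff, (gauss_lim_ext (fun x => l * exp (w 0%nat * x))); [intros; ring |].
        apply gauss_lim_scal; auto.
Qed.

(* The coefficient of the Gaussian v k, where k = i * n + j, in z^T A z:
   it is z_i z_j when i < j and 0 otherwise. *)
Definition qcoef (n : nat) (z : list R) (k : nat) : R :=
  if Nat.ltb (k / n) (k mod n) then nth (k / n) z 0 * nth (k mod n) z 0 else 0.

Lemma div_mod_pair n i j : (j < n)%nat -> ((i * n + j) / n = i /\ (i * n + j) mod n = j)%nat.
Proof.
  intros Hj. split; symmetry;
    [apply (Nat.div_unique _ _ _ j) | apply (Nat.mod_unique _ _ i j)]; lia.
Qed.

Lemma qform_linear n v z : qform n v z = sumR (n * n) (fun k => qcoef n z k * v k).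
Proof.
  rewrite sumR_mul. unfold qform. apply sumR_ext_lt. intros i _. apply sumR_ext_lt. intros j Hj.
  unfold qcoef, entry. destruct (div_mod_pair n i j Hj) as [-> ->]. destruct (Nat.ltb i j); ring.
Qed.

Lemma signs_entries n z : In z (signs n) -> forall i, Rabs (nth i z 0) <= 1.
Proof.
  revert z. induction n as [| n IH]; simpl; intros z Hz i.
  - destruct Hz as [<- | []]. destruct i; simpl; rewrite Rabs_R0; lra.
  - apply in_app_or in Hz.
    destruct Hz as [Hz | Hz]; apply in_map_iff in Hz; destruct Hz as [z' [<- Hz']];
      destruct i; simpl; auto; unfold Rabs; destruct (Rcase_abs _); lra.
Qed.

Lemma signs_nonempty n : signs n <> [].
Proof.
  induction n; simpl; [discriminate |]. destruct (signs n); [contradiction | discriminate].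
Qed.

Lemma signs_length n : length (signs n) = (2 ^ n)%nat.
Proof. induction n; simpl; auto. rewrite length_app, !length_map, IHn. lia. Qed.

Lemma qcoef_abs_le n z k : In z (signs n) -> Rabs (qcoef n z k) <= 1.
Proof.
  intros Hz. pose proof (signs_entries n z Hz) as Hent. unfold qcoef.
  destruct (Nat.ltb _ _); [| rewrite Rabs_R0; lra].
  rewrite Rabs_mult. pose proof (Hent (k / n)%nat). pose proof (Hent (k mod n)%nat).
  pose proof (Rabs_pos (nth (k / n) z 0)). pose proof (Rabs_pos (nth (k mod n) z 0)). nra.
Qed.

Lemma qform_lipschitz n z v w : In z (signs n) ->
  Rabs (qform n v z - qform n w z) <= sumR (n * n) (fun k => Rabs (v k - w k)).
Proof.
  intros Hz. rewrite !qform_linear.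
  replace (sumR (n * n) (fun k => qcoef n z k * v k) - sumR (n * n) (fun k => qcoef n z k * w k))
    with (sumR (n * n) (fun k => qcoef n z k * (v k - w k))).
  2: { rewrite (sumR_ext _ _ (fun k => qcoef n z k * v k + -1 * (qcoef n z k * w k)))
         by (intros; ring).
       rewrite sumR_plus, sumR_scal. ring. }
  eapply Rle_trans; [apply sumR_abs |]. apply sumR_le_lt. intros k _. rewrite Rabs_mult.
  pose proof (qcoef_abs_le n z k Hz). pose proof (Rabs_pos (v k - w k)).
  pose proof (Rabs_pos (qcoef n z k)). nra.
Qed.

Lemma min_list_lipschitz {A} (f g : A -> R) D L : 0 <= D ->
  (forall z, In z L -> Rabs (f z - g z) <= D) ->
  Rabs (min_list (map f L) - min_list (map g L)) <= D.
Proof.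
  intros HD H. destruct L as [| z L]; simpl; [rewrite Rminus_0_r, Rabs_R0; auto |].
  assert (Hfold : forall L' a b, Rabs (a - b) <= D ->
    (forall z, In z L' -> Rabs (f z - g z) <= D) ->
    Rabs (fold_left Rmin (map f L') a - fold_left Rmin (map g L') b) <= D).
  { induction L' as [| z' L' IH]; simpl; intros a b Hab HL; auto.
    apply IH; auto. apply Rabs_le. pose proof (HL z' (or_introl eq_refl)) as Hz'.
    apply Rabs_le_between in Hab. apply Rabs_le_between in Hz'.
    unfold Rmin; destruct (Rle_dec a (f z')), (Rle_dec b (g z')); lra. }
  apply Hfold; intros; apply H; simpl; auto.
Qed.

Lemma min_list_ge {A} (f : A -> R) B L : L <> [] -> (forall z, In z L -> B <= f z) ->
  B <= min_list (map f L).
Proof.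
  intros Hne H. destruct L as [| z L]; [contradiction |]. simpl.
  assert (Hfold : forall L' a, B <= a -> (forall z, In z L' -> B <= f z) ->
    B <= fold_left Rmin (map f L') a).
  { induction L' as [| z' L' IH]; simpl; intros a Ha HL; auto.
    apply IH; auto. apply Rmin_glb; auto. }
  apply Hfold; intros; apply H; simpl; auto.
Qed.

Lemma expect_min_qform_exists n : exists l, gauss_expect (n * n) (min_qform n) l.
Proof.
  apply (expect_lipschitz (n * n) 1); [lra |]. intros v w. rewrite Rmult_1_l.
  apply min_list_lipschitz.
  - apply sumR_nonneg. intros; apply Rabs_pos.
  - intros z Hz. apply qform_lipschitz, Hz.
Qed.

Definition pair_count (n : nat) : R :=
  sumR n (fun i => sumR n (fun j => if Nat.ltb i j then 1 else 0)).

Lemma pair_count_eq n : 2 * pair_count n + INR n = INR n * INR n.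
Proof.
  induction n as [| n IH]; [unfold pair_count; simpl; ring |].
  assert (Hstep : pair_count (S n) = pair_count n + INR n).
  { unfold pair_count.
    rewrite (sumR_ext (S n) _ (fun i => sumR n (fun j => if Nat.ltb i j then 1 else 0)
                                       + (if Nat.ltb i n then 1 else 0))) by reflexivity.
    rewrite sumR_plus. simpl sumR at 1 3.
    rewrite (sumR_ext_lt n (fun j => if Nat.ltb n j then 1 else 0) (fun _ => 0)).
    2: { intros j Hj. destruct (Nat.ltb_spec n j); [lia | reflexivity]. }
    rewrite (sumR_ext_lt n (fun i => if Nat.ltb i n then 1 else 0) (fun _ => 1)).
    2: { intros i Hi. destruct (Nat.ltb_spec i n); [reflexivity | lia]. }
    rewrite !sumR_const, Nat.ltb_irrefl. ring. }
  rewrite Hstep, S_INR. lra.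
Qed.

Lemma qcoef_sq_sum n z : In z (signs n) ->
  sumR (n * n) (fun k => qcoef n z k * qcoef n z k) <= pair_count n.
Proof.
  intros Hz. rewrite sumR_mul. unfold pair_count.
  apply sumR_le_lt. intros i _. apply sumR_le_lt. intros j Hj.
  destruct (div_mod_pair n i j Hj) as [Hdiv Hmod]. unfold qcoef. rewrite Hdiv, Hmod.
  destruct (Nat.ltb i j); [| lra].
  pose proof (signs_entries n z Hz i) as Hi. pose proof (signs_entries n z Hz j) as Hj'.
  apply Rabs_le_between in Hi. apply Rabs_le_between in Hj'.
  assert (0 <= nth i z 0 * nth i z 0 <= 1) by nra. assert (0 <= nth j z 0 * nth j z 0 <= 1) by nra.
  replace (nth i z 0 * nth j z 0 * (nth i z 0 * nth j z 0))
    with ((nth i z 0 * nth i z 0) * (nth j z 0 * nth j z 0)) by ring.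
  nra.
Qed.

Lemma exp_le_mono x y : x <= y -> exp x <= exp y.
Proof. intros [H | ->]; [left; apply exp_increasing, H | right; reflexivity]. Qed.

(* E[exp(-lam z^T A z)] <= exp(lam^2 n^2 / 4): the linear form has squared
   coefficient norm at most n(n-1)/2 <= n^2/2. *)
Lemma expect_exp_qform n lam z : In z (signs n) -> exists e,
  e <= exp (lam * lam * (INR n * INR n) / 4) /\
  gauss_expect (n * n) (fun v => exp (- lam * qform n v z)) e.
Proof.
  intros Hz.
  destruct (expect_exp_linear (n * n) (fun k => - lam * qcoef n z k)) as [l [[_ Hl] Hexp]].
  exists l. split.
  - eapply Rle_trans; [apply Hl |]. apply exp_le_mono.
    rewrite (sumR_ext _ _ (fun k => (lam * lam) * (qcoef n z k * qcoef n z k))) by (intros; ring).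
    rewrite sumR_scal. pose proof (qcoef_sq_sum n z Hz). pose proof (pair_count_eq n).
    pose proof (pos_INR n). assert (0 <= lam * lam) by nra. nra.
  - eapply expect_ext; [| apply Hexp]. intros v. rewrite qform_linear, <- sumR_scal.
    f_equal. apply sumR_ext. intros; ring.
Qed.

Fixpoint sumL {A} (L : list A) (F : A -> R) : R :=
  match L with [] => 0 | z :: L' => F z + sumL L' F end.

Lemma sumL_nonneg {A} (L : list A) F : (forall z, 0 <= F z) -> 0 <= sumL L F.
Proof. intros HF. induction L; simpl; [lra | pose proof (HF a); lra]. Qed.

Lemma sumL_ge_term {A} (L : list A) F z : In z L -> (forall z, 0 <= F z) -> F z <= sumL L F.
Proof.
  intros Hz HF. induction L as [| z' L IH]; simpl; [contradiction |].
  pose proof (sumL_nonneg L F HF). pose proof (HF z').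
  destruct Hz as [-> | Hz]; [lra | pose proof (IH Hz); lra].
Qed.

Lemma expect_sumL {A} m B (F : A -> (nat -> R) -> R) L :
  (forall z, In z L -> exists e, e <= B /\ gauss_expect m (F z) e) ->
  exists E, E <= INR (length L) * B /\ gauss_expect m (fun v => sumL L (fun z => F z v)) E.
Proof.
  induction L as [| z L IH]; intros H.
  - exists (0 * gauss_mass ^ m). split; [simpl; lra |].
    apply (expect_ext m (fun _ => 0)); [reflexivity | apply expect_const].
  - destruct IH as [E [HE HexpE]]; [intros; apply H; simpl; auto |].
    destruct (H z) as [e [He Hexpe]]; [simpl; auto |].
    exists (e + E). split; [rewrite length_cons, S_INR; lra |].
    apply expect_plus; auto.
Qed.

Lemma ln_le_affine S a : 0 < S -> 0 < a -> ln S <= S / a + ln a - 1.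
Proof.
  intros HS Ha. pose proof (exp_ineq1_le (ln (S / a))) as H.
  rewrite exp_ln in H by (apply Rdiv_lt_0_compat; auto).
  unfold Rdiv in *. rewrite ln_mult, ln_Rinv in H by (auto; apply Rinv_0_lt_compat; auto). lra.
Qed.

(* Soft-min bound: for lam, a > 0,
     min_z f z >= -(1/lam) ln (sum_z e^{-lam f z}) >= -(S/a + ln a - 1)/lam,
   where S = sum_z e^{-lam f z}; the last bound is affine in S. *)
Lemma softmin_bound {A} (f : A -> R) L lam a : L <> [] -> 0 < lam -> 0 < a ->
  - (sumL L (fun z => exp (- lam * f z)) / a + ln a - 1) / lam <= min_list (map f L).
Proof.
  intros Hne Hlam Ha. set (S := sumL L (fun z => exp (- lam * f z))).
  apply min_list_ge; auto. intros z Hz.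
  assert (Hterm : exp (- lam * f z) <= S).
  { apply (sumL_ge_term L (fun z => exp (- lam * f z))); auto. intros; apply Rlt_le, exp_pos. }
  assert (HS : 0 < S) by (pose proof (exp_pos (- lam * f z)); lra).
  apply ln_le in Hterm; [| apply exp_pos]. rewrite ln_exp in Hterm.
  pose proof (ln_le_affine S a HS Ha).
  apply (Rmult_le_reg_l lam); auto.
  replace (lam * (- (S / a + ln a - 1) / lam)) with (- (S / a + ln a - 1)) by (field; lra). lra.
Qed.

Lemma expect_softmin_sum n lam : exists E,
  E <= 2 ^ n * exp (lam * lam * (INR n * INR n) / 4) /\
  gauss_expect (n * n) (fun v => sumL (signs n) (fun z => exp (- lam * qform n v z))) E.
Proof.
  destruct (expect_sumL (n * n) (exp (lam * lam * (INR n * INR n) / 4))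
              (fun z v => exp (- lam * qform n v z)) (signs n)) as [E [HE Hexp]].
  { intros z Hz. apply expect_exp_qform, Hz. }
  exists E. split; auto. rewrite signs_length, pow_INR in HE. exact HE.
Qed.

Lemma min_qform_expect_lower n lam l : 0 < lam -> gauss_expect (n * n) (min_qform n) l ->
  - (1 + INR n * ln 2 + lam * lam * (INR n * INR n) / 4) / lam <= l.
Proof.
  intros Hlam Hl.
  set (beta := lam * lam * (INR n * INR n) / 4).
  set (a := 2 ^ n * exp beta).
  assert (Ha : 0 < a) by (apply Rmult_lt_0_compat; [apply pow_lt; lra | apply exp_pos]).
  assert (Hlna : ln a = INR n * ln 2 + beta).
  { unfold a. rewrite ln_mult, ln_pow, ln_exp by (try apply pow_lt; try apply exp_pos; lra).
    reflexivity. }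
  assert (Hlna0 : 0 <= ln a).
  { rewrite Hlna. pose proof ln_lt_2. pose proof (pos_INR n). unfold beta. nra. }
  destruct (expect_softmin_sum n lam) as [E [HE HexpE]]. fold beta a in HE.
  set (c := gauss_mass ^ (n * n)).
  assert (Hle : - / (lam * a) * E + - ((ln a - 1) / lam) * c <= l).
  { apply (expect_le (n * n) (fun v => - / (lam * a) *
             sumL (signs n) (fun z => exp (- lam * qform n v z)) + - ((ln a - 1) / lam))
             (min_qform n));
      [| | exact Hl].
    - intros v. unfold min_qform.
      eapply Rle_trans; [| apply (softmin_bound _ _ lam a); auto using signs_nonempty].
      apply Req_le. field. lra.
    - apply expect_plus; [apply expect_scal, HexpE | apply expect_const]. }
  assert (Hfirst : / (lam * a) * E <= / lam).
  { replace (/ (lam * a) * E) with (E / a * / lam) by (field; lra).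
    rewrite <- (Rmult_1_l (/ lam)) at 2.
    apply Rmult_le_compat_r; [apply Rlt_le, Rinv_0_lt_compat, Hlam |].
    apply (Rmult_le_reg_l a); auto. field_simplify; lra. }
  assert (Hsecond : (ln a - 1) / lam * c <= ln a / lam).
  { pose proof (gauss_mass_pow (n * n)) as Hc. fold c in Hc.
    unfold Rdiv. replace ((ln a - 1) * / lam * c) with ((ln a - 1) * c * / lam) by ring.
    apply Rmult_le_compat_r; [apply Rlt_le, Rinv_0_lt_compat, Hlam | nra]. }
  replace (- (1 + INR n * ln 2 + beta) / lam) with (- / lam - ln a / lam)
    by (rewrite Hlna; field; lra).
  lra.
Qed.

(* ln 2 <= 0.6938, from 2 <= 1 + x + ... + x^5/5! <= e^x at x = 0.6938. *)
Lemma ln2_le : ln 2 <= 6938 / 10000.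
Proof.
  assert (H := exp_ge_taylor (6938 / 10000) 5 ltac:(lra)). simpl in H.
  rewrite <- (ln_exp (6938 / 10000)). apply ln_le; lra.
Qed.

Theorem lemma4 (n : nat) (hn : (1 <= n)%nat) :
  exists l : R,
    gauss_expect (n * n) (min_qform n) l /\
    l >= - (601 / 1000) * sqrt (INR n) - (833 / 1000) * (INR n * sqrt (INR n)).
Proof.
  destruct (expect_min_qform_exists n) as [l Hl].
  exists l. split; [exact Hl |].
  assert (Hn : 1 <= INR n) by (apply (le_INR 1); auto).
  set (s := sqrt (INR n)).
  assert (Hs : 0 < s) by (apply sqrt_lt_R0; lra).
  assert (Hss : s * s = INR n) by (apply sqrt_sqrt; lra).
  (* the general bound at lam = 5 / (3 sqrt n) *)
  assert (Hbound := min_qform_expect_lower n (5 / 3 / s) l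
                      ltac:(apply Rdiv_lt_0_compat; lra) Hl).
  replace (- (1 + INR n * ln 2 + 5 / 3 / s * (5 / 3 / s) * (INR n * INR n) / 4) / (5 / 3 / s))
    with (- (3 / 5) * (s + (INR n * s) * ln 2 + 25 / 36 * (INR n * s))) in Hbound
    by (rewrite <- Hss; field; lra).
  assert (INR n * s * ln 2 <= INR n * s * (6938 / 10000)).
  { apply Rmult_le_compat_l; [nra | apply ln2_le]. }
  nra.
Qed.
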